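(* For a positive integer $n$, let $f(n)$ be the maximum value of $\operatorname{Re}\big(\sum_{\xi\in S}\xi\big)$ and $g(n)$ the maximum value of $\big|\sum_{\xi \in S} \xi\big|$, both over all subsets $S$ of the set of $n$-th roots of unity. Then $g(n) = \sqrt{f(n)^2+1}$ if $4 \mid n$, and $g(n) = f(n)$ otherwise. *)

From HB Require Import structures.
From mathcomp Require Import all_boot all_order all_algebra all_field.
Set Implicit Arguments. Unset Strict Implicit. Unset Printing Implicit Defensive.
Import Order.TTheory GRing.Theory Num.Theory.
Local Open Scope ring_scope.

Definition unity_subset (n : nat) (S : seq algC) : bool :=
  uniq S && all (fun x => x ^+ n == 1) S.

Definition re_sum_values (n : nat) (x : algC) : Prop :=
  exists S, unity_subset n S /\ x = 'Re (\sum_(z <- S) z).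

Definition abs_sum_values (n : nat) (x : algC) : Prop :=
  exists S, unity_subset n S /\ x = `|\sum_(z <- S) z|.

Definition is_max (P : algC -> Prop) (m : algC) : Prop :=
  P m /\ forall x, P x -> x <= m.

From HB Require Import structures.
From mathcomp Require Import all_boot all_order all_algebra all_field.
From mathcomp Require Import ring.
Import Order.TTheory GRing.Theory Num.Theory.
Local Open Scope ring_scope.

(* Let S be a set of n-th roots of unity with |Σ S| maximal and t := Σ S.
   Adding or removing a root x changes |t|^2 by 1 ± 2 Re (x t^* ), so S is
   exactly the set of roots with Re (x t^* ) > 0, and no root has
   Re (x t^* ) = 0.  Multiplying S by a root of unity rotates t, and taking
   complements negates it (the roots sum to 0 when n > 1); choosing the
   rotation that maximises Re t, and conjugating if necessary, we may assume
   Im t >= 0 and Re (-z t) <= Re t for every root z.  For z := (x^* )^2 the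
   identity Re t + Re ((x^* )^2 t) = 2 Re x Re (x t^* ) then shows that
   Re (x t^* ) has the sign of Re x.  Hence S consists of the roots with
   positive real part, whose sum is the real number f, together with i when
   4 | n (±i being the only roots of real part 0), so g = f or
   g = |f + i| = sqrt (f^2 + 1). *)

Lemma sqr_normCD (x y : algC) :
  `|x + y| ^+ 2 = `|x| ^+ 2 + 2 * 'Re (x * y^*) + `|y| ^+ 2.
Proof. by rewrite !normCK ReE rmorphD rmorphM /= conjCK; field. Qed.

Lemma Re_mulC_conj (x y : algC) : 'Re (x * y^*) = 'Re (y * x^*).
Proof. by rewrite -Re_conj rmorphM /= conjCK mulrC. Qed.

Lemma Re_add_rot2 (x t : algC) : `|x| = 1 ->
  'Re t + 'Re (x^* ^+ 2 * t) = 2 * 'Re x * 'Re (x * t^*).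
Proof.
move=> x1; have x0 : x != 0 by rewrite -normr_eq0 x1 oner_neq0.
have xc : x^* = x^-1 by apply: (mulfI x0); rewrite -normCK x1 expr1n divff.
by rewrite !ReE !rmorphM /= !conjCK xc; field.
Qed.

Lemma Re_mul_conj_sign (x t : algC) : `|x| = 1 ->
  'Re (- x^* ^+ 2 * t) <= 'Re t -> 0 <= 'Re x * 'Re (x * t^*).
Proof.
move=> x1; rewrite mulNr raddfN /= -subr_ge0 opprK Re_add_rot2 // -mulrA.
by rewrite pmulr_rge0.
Qed.

Lemma sqrC_Re_eq0 {x : algC} : `|x| = 1 -> 'Re x = 0 -> x ^+ 2 = -1.
Proof.
move=> x1 Rex; have := normC2_Re_Im x; rewrite x1 Rex expr1n expr0n add0r => Im2.
by rewrite [x]algCrect Rex add0r exprMn sqrCi -Im2 mulN1r.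
Qed.

Lemma sqrC_eqN1_dvd4 {x : algC} {n} : x ^+ 2 = -1 -> x ^+ n = 1 -> (4 %| n)%N.
Proof.
move=> x2 xn; have x4 : x ^+ 4 = 1 by rewrite -[4%N]/(2 * 2)%N exprM x2 sqrrN expr1n.
have : x ^+ (n %% 4) = 1.
  by rewrite -xn {2}(divn_eq n 4) exprD mulnC exprM x4 expr1n mul1r.
have N1_neq1 : (-1 : algC) != 1 by rewrite eqNr oner_eq0.
rewrite /dvdn; have : (n %% 4 < 4)%N := ltn_mod n 4.
case: (n %% 4)%N => [|[|[|[|//]]]] // _.
- by rewrite expr1 => x1; move: N1_neq1; rewrite -x2 x1 expr1n eqxx.
- by move=> x21; move: N1_neq1; rewrite -x2 x21 eqxx.
- rewrite exprS x2 mulrN1 => /eqP; rewrite eqr_oppLR => /eqP xN1.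
  by move: N1_neq1; rewrite -x2 xN1 sqrrN expr1n eqxx.
Qed.

Lemma expr_i_dvd4 {n} : (4 %| n)%N -> 'i ^+ n = 1 :> algC.
Proof.
by case/dvdnP=> k ->; rewrite mulnC exprM -[4%N]/(2 * 2)%N exprM sqrCi sqrrN !expr1n.
Qed.

Lemma real_seq_max {T : eqType} {R : numDomainType} (F : T -> R) (s : seq T) :
  s != [::] -> {in s, forall x, F x \is Num.real} ->
  exists2 x, x \in s & {in s, forall y, F y <= F x}.
Proof.
elim: s => [|a [|b s] IH] // _ Freal.
  by exists a => [|y]; rewrite ?mem_seq1 // => /eqP ->.
have [|m ms m_max] := IH isT; first by move=> x xs; apply: Freal; rewrite inE xs orbT.
have Fm : F m \is Num.real by apply: Freal; rewrite inE ms orbT.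
have [Fam|Fma] := real_leP (Freal a (mem_head _ _)) Fm.
- exists m => [|y]; first by rewrite inE ms orbT.
  by rewrite inE => /predU1P [->|/m_max].
- exists a => [|y]; first exact: mem_head.
  by rewrite inE => /predU1P [->//|/m_max Fym]; apply: le_trans Fym (ltW Fma).
Qed.

Lemma unity_roots_seq n : (0 < n)%N ->
  {l : seq algC | uniq l & forall x, (x \in l) = (x ^+ n == 1)}.
Proof.
move=> n_gt0; have [z zP] := C_prim_root_exists n_gt0.
exists [seq z ^+ i | i : 'I_n].
  rewrite map_inj_uniq ?enum_uniq // => i j /eqP.
  by rewrite (eq_prim_root_expr zP) !modn_small // => /eqP /val_inj.
move=> x; apply/imageP/eqP => [[i _ ->]|/(prim_rootP zP) [i ->]]; last by exists i.
by rewrite -exprM mulnC exprM (prim_expr_order zP) expr1n.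
Qed.

Definition pos_roots (l : seq algC) := [seq x <- l | 0 < 'Re x].

Section UnityRoots.

Context {n : nat}.
Hypothesis n_gt0 : (0 < n)%N.

Lemma norm_unity_root {x : algC} : x ^+ n = 1 -> `|x| = 1.
Proof.
move=> xn; apply/eqP; rewrite -(pexpr_eq1 n_gt0) ?normr_ge0 //.
by rewrite -normrX xn normr1.
Qed.

Lemma unity_subset_root {S} {x : algC} : unity_subset n S -> x \in S -> x ^+ n = 1.
Proof. by case/andP=> _ /allP S_roots /S_roots/eqP. Qed.

Lemma unity_subset_perm S S' : unity_subset n S -> unity_subset n S' ->
  (forall x, x ^+ n = 1 -> (x \in S) = (x \in S')) -> perm_eq S S'.
Proof.
move=> S_sub S'_sub memSS'; apply: uniq_perm; [by case/andP: S_sub|by case/andP: S'_sub|].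
move=> x; have [/eqP/memSS'//|xn] := boolP (x ^+ n == 1).
have notin S'' : unity_subset n S'' -> x \in S'' = false.
  by move=> S''_sub; apply: contraNF xn => /(unity_subset_root S''_sub) ->.
by rewrite !notin.
Qed.

Lemma unity_subset_cons {x : algC} {S} : x ^+ n = 1 -> x \notin S -> unity_subset n S ->
  unity_subset n (x :: S).
Proof.
by move=> xn xS /andP [S_uniq S_roots]; rewrite /unity_subset /= xS xn eqxx S_uniq.
Qed.

Lemma unity_subset_rem (x : algC) S : unity_subset n S -> unity_subset n (rem x S).
Proof.
case/andP=> S_uniq /allP S_roots; rewrite /unity_subset rem_uniq //=.
by apply/allP => y /mem_rem /S_roots.
Qed.

Lemma unity_subset_rot {r : algC} {S} : r ^+ n = 1 -> unity_subset n S ->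
  unity_subset n [seq r * x | x <- S].
Proof.
move=> rn /andP [S_uniq /allP S_roots].
have r0 : r != 0 by rewrite -normr_eq0 norm_unity_root ?oner_neq0.
rewrite /unity_subset map_inj_uniq ?S_uniq; last exact: mulfI.
by rewrite all_map; apply/allP => x /S_roots /eqP xn /=; rewrite exprMn rn xn mul1r.
Qed.

Lemma unity_subset_conj {S} : unity_subset n S -> unity_subset n [seq x^* | x <- S].
Proof.
case/andP=> S_uniq /allP S_roots.
rewrite /unity_subset map_inj_uniq ?S_uniq; last exact: (can_inj conjCK).
by rewrite all_map; apply/allP => x /S_roots /eqP xn /=; rewrite -rmorphXn xn rmorph1.
Qed.

Section RootsSeq.

Context {l : seq algC}.
Hypothesis l_uniq : uniq l.
Hypothesis l_roots : forall x, (x \in l) = (x ^+ n == 1).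

Lemma unity_subset_roots : unity_subset n l.
Proof. by rewrite /unity_subset l_uniq; apply/allP => x; rewrite l_roots. Qed.

Lemma unity_subset_filter (P : pred algC) : unity_subset n [seq x <- l | P x].
Proof.
rewrite /unity_subset filter_uniq //=.
by apply/allP => x; rewrite mem_filter l_roots => /andP [].
Qed.

Lemma sum_unity_roots : (1 < n)%N -> \sum_(x <- l) x = 0.
Proof.
move=> n_gt1; have [w wP] := C_prim_root_exists n_gt0.
have w_neq1 : w != 1.
  have := eq_prim_root_expr wP 1 0; rewrite expr1 expr0 => ->.
  by rewrite modn_small // mod0n.
have wn := prim_expr_order wP.
have w0 : w != 0 by rewrite -normr_eq0 norm_unity_root ?oner_neq0.
have rot_l : perm_eq l [seq w * x | x <- l].
  apply: unity_subset_perm => [||x _]; first exact: unity_subset_roots.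
    exact: unity_subset_rot unity_subset_roots.
  rewrite -{2}[x](mulVKf w0) mem_map ?l_roots; last exact: mulfI.
  by rewrite exprMn exprVn wn invr1 mul1r.
have sum_rot : \sum_(x <- l) x = w * \sum_(x <- l) x.
  by rewrite {1}(perm_big _ rot_l) big_map mulr_sumr.
have : (w - 1) * \sum_(x <- l) x = 0 by rewrite mulrBl mul1r -sum_rot subrr.
by move/eqP; rewrite mulf_eq0 subr_eq0 (negbTE w_neq1) => /eqP.
Qed.

Lemma unity_subset_compl S : (1 < n)%N -> unity_subset n S ->
  exists2 S', unity_subset n S' & \sum_(x <- S') x = - \sum_(x <- S) x.
Proof.
move=> n_gt1 S_sub; exists [seq x <- l | x \notin S]; first exact: unity_subset_filter.
have S_compl : perm_eq l (S ++ [seq x <- l | x \notin S]).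
  apply: uniq_perm => //.
    rewrite cat_uniq filter_uniq // andbT; case/andP: S_sub => -> _ /=.
    by apply/hasPn => x; rewrite mem_filter => /andP [].
  move=> x; rewrite mem_cat mem_filter; case xS: (x \in S) => //=.
  by rewrite l_roots (unity_subset_root S_sub xS) eqxx.
apply/eqP; rewrite -addr_eq0 addrC.
by rewrite -big_cat -(perm_big _ S_compl) sum_unity_roots.
Qed.

Lemma Re_sum_le_pos_roots S : unity_subset n S ->
  'Re (\sum_(x <- S) x) <= 'Re (\sum_(x <- pos_roots l) x).
Proof.
move=> S_sub; have S_filter : perm_eq S [seq x <- l | x \in S].
  apply: unity_subset_perm => // [|x xn]; first exact: unity_subset_filter.
  by rewrite mem_filter l_roots xn eqxx andbT.
rewrite (perm_big _ S_filter) !big_filter !raddf_sum /=.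
rewrite big_mkcond [X in _ <= X]big_mkcond /=; apply: ler_sum => x _.
have [Re_gt0|Re_le0] := boolP (0 < 'Re x); case: (x \in S) => //; first exact: ltW.
by rewrite real_leNgt ?Creal_Re.
Qed.

Lemma sum_pos_roots_real : \sum_(x <- pos_roots l) x \is Num.real.
Proof.
have conj_pos : perm_eq [seq x^* | x <- pos_roots l] (pos_roots l).
  apply: unity_subset_perm; last 1 first.
  - move=> x xn; rewrite -{1}[x]conjCK mem_map; last exact: (can_inj conjCK).
    by rewrite !mem_filter Re_conj !l_roots -rmorphXn xn rmorph1.
  - exact/unity_subset_conj/unity_subset_filter.
  - exact: unity_subset_filter.
by apply/CrealP; rewrite rmorph_sum -[RHS](perm_big _ conj_pos) big_map.
Qed.

Definition signed_root (x : algC) := (x ^+ n == 1) || ((- x) ^+ n == 1).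

Lemma norm_signed_root {r} : signed_root r -> `|r| = 1.
Proof. by case/orP=> /eqP/norm_unity_root; rewrite ?normrN. Qed.

Lemma signed_root_mulN z r : z ^+ n = 1 -> signed_root r -> signed_root (- z * r).
Proof. by move=> zn; rewrite /signed_root mulNr opprK -mulrN !exprMn zn !mul1r orbC. Qed.

Lemma signed_root_sum r S : (1 < n)%N -> signed_root r -> unity_subset n S ->
  exists2 S', unity_subset n S' & \sum_(x <- S') x = r * \sum_(x <- S) x.
Proof.
move=> n_gt1 /orP [] /eqP rn S_sub.
  by exists [seq r * x | x <- S]; [exact: unity_subset_rot|rewrite big_map mulr_sumr].
have [S' S'_sub S'E] := unity_subset_compl _ n_gt1 (unity_subset_rot rn S_sub).
by exists S'; rewrite // S'E big_map -mulr_sumr mulNr opprK.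
Qed.

Lemma exists_dominant_max {S0} : (1 < n)%N -> unity_subset n S0 ->
  exists2 S, unity_subset n S &
    [/\ `|\sum_(x <- S) x| = `|\sum_(x <- S0) x|, 0 <= 'Im (\sum_(x <- S) x) &
        forall z, z ^+ n = 1 -> 'Re (- z * \sum_(x <- S) x) <= 'Re (\sum_(x <- S) x)].
Proof.
move=> n_gt1 S0_sub; set s := \sum_(x <- S0) x.
have signedP r : (r \in l ++ [seq - x | x <- l]) = signed_root r.
  rewrite mem_cat l_roots; congr (_ || _).
  by rewrite -{1}[r]opprK mem_map ?l_roots //; exact: oppr_inj.
have [|r] := real_seq_max (fun r => 'Re (r * s)) (l ++ [seq - x | x <- l]) _
  (fun r _ => Creal_Re _).
  by apply/eqP => /(congr1 (fun L => 1 \in L)); rewrite signedP /signed_root expr1n eqxx.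
rewrite signedP => r_signed r_max.
have [S1 S1_sub S1E] := signed_root_sum r S0 n_gt1 r_signed S0_sub.
have S1_dom z : z ^+ n = 1 -> 'Re (- z * (r * s)) <= 'Re (r * s).
  by move=> zn; rewrite mulrA; apply: r_max; rewrite signedP signed_root_mulN.
have S1_norm : `|r * s| = `|s| by rewrite normrM (norm_signed_root r_signed) mul1r.
have [Im_ge0|Im_lt0] := boolP (0 <= 'Im (r * s)).
  by exists S1; rewrite // S1E; split.
exists [seq x^* | x <- S1]; first exact: unity_subset_conj.
rewrite big_map -rmorph_sum S1E norm_conjC Im_conj oppr_ge0 Re_conj; split => //.
  by apply: ltW; rewrite real_ltNge ?Creal_Im ?real0.
move=> z zn; rewrite -[z]conjCK -rmorphN -rmorphM Re_conj; apply: S1_dom.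
by rewrite -rmorphXn zn rmorph1.
Qed.

Section NormMaximiser.

Variable S : seq algC.
Hypothesis S_sub : unity_subset n S.
Hypothesis S_max :
  forall S', unity_subset n S' -> `|\sum_(x <- S') x| <= `|\sum_(x <- S) x|.
Local Notation t := (\sum_(x <- S) x).

Lemma norm_max_in {x} : x \in S -> 1 <= 2 * 'Re (x * t^*).
Proof.
move=> xS; have x1 := norm_unity_root (unity_subset_root S_sub xS).
have sum_rem : \sum_(y <- rem x S) y = t + - x.
  by rewrite (perm_big _ (perm_to_rem xS)) big_cons addrC addKr.
have : `|t + - x| ^+ 2 <= `|t| ^+ 2.
  rewrite lerXn2r ?nnegrE ?normr_ge0 // -sum_rem.
  exact: S_max _ (unity_subset_rem _ _ S_sub).
rewrite sqr_normCD normrN x1 expr1n rmorphN mulrN raddfN /= Re_mulC_conj.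
by rewrite -addrA gerDl mulrN addrC subr_le0.
Qed.

Lemma norm_max_out {x} : x ^+ n = 1 -> x \notin S -> 2 * 'Re (x * t^*) <= -1.
Proof.
move=> xn xS; have : `|x + t| ^+ 2 <= `|t| ^+ 2.
  rewrite lerXn2r ?nnegrE ?normr_ge0 //.
  by have := S_max _ (unity_subset_cons xn xS S_sub); rewrite big_cons.
rewrite sqr_normCD (norm_unity_root xn) expr1n.
by rewrite addrC gerDl -sub0r lerBrDr addrC.
Qed.

Lemma norm_max_Re {x} : x ^+ n = 1 ->
  if x \in S then 0 < 'Re (x * t^*) else 'Re (x * t^*) < 0.
Proof.
move=> xn; case: ifPn => [/norm_max_in|/(norm_max_out xn)] Re_bound.
  by rewrite -(pmulr_rgt0 _ (ltr0n _ 2)); apply: lt_le_trans Re_bound.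
by rewrite -(pmulr_rlt0 _ (ltr0n _ 2)); apply: le_lt_trans Re_bound _; rewrite oppr_lt0.
Qed.

Lemma norm_max_mem {x} : x ^+ n = 1 -> (x \in S) = (0 < 'Re (x * t^*)).
Proof. by move/norm_max_Re; case: (x \in S) => [->//|/lt_gtF]. Qed.

Lemma norm_max_Re_neq0 {x} : x ^+ n = 1 -> 'Re (x * t^*) != 0.
Proof. by move/norm_max_Re; case: (x \in S) => [/gt_eqF|/lt_eqF] ->. Qed.

Hypothesis S_dom : forall z, z ^+ n = 1 -> 'Re (- z * t) <= 'Re t.

Lemma dominant_max_mem {x} : x ^+ n = 1 -> 'Re x != 0 -> (x \in S) = (0 < 'Re x).
Proof.
move=> xn Rex_neq0; have sign : 0 <= 'Re x * 'Re (x * t^*).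
  apply: Re_mul_conj_sign (norm_unity_root xn) (S_dom _ _).
  by rewrite -exprM mulnC exprM -rmorphXn xn rmorph1 expr1n.
rewrite norm_max_mem //.
move: Rex_neq0; rewrite real_neqr_lt ?Creal_Re // => /orP [Rex_lt0|Rex_gt0].
  rewrite (nmulr_rge0 _ Rex_lt0) in sign.
  by rewrite (lt_gtF Rex_lt0) real_ltNge ?Creal_Re ?sign.
rewrite (pmulr_rge0 _ Rex_gt0) in sign.
by rewrite Rex_gt0 lt_def sign norm_max_Re_neq0.
Qed.

Hypothesis S_Im : 0 <= 'Im t.

Lemma dominant_max_perm :
  perm_eq S (if (4 %| n)%N then 'i :: pos_roots l else pos_roots l).
Proof.
have i_notin : 'i \notin pos_roots l by rewrite mem_filter Re_i ltxx.
apply: unity_subset_perm => //.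
  case: ifP => [n4|_]; last exact: unity_subset_filter.
  exact: unity_subset_cons (expr_i_dvd4 n4) i_notin (unity_subset_filter _).
move=> x xn; have pos_mem : (x \in pos_roots l) = (0 < 'Re x).
  by rewrite mem_filter l_roots xn eqxx andbT.
have [Rex0|Rex_neq0] := eqVneq ('Re x) 0; last first.
  have x_neq_i : x != 'i by apply: contraNneq Rex_neq0 => ->; rewrite Re_i.
  by rewrite dominant_max_mem // -pos_mem; case: ifP; rewrite // inE (negbTE x_neq_i).
have x2 := sqrC_Re_eq0 (norm_unity_root xn) Rex0.
have n4 := sqrC_eqN1_dvd4 x2 xn.
rewrite n4 inE pos_mem Rex0 ltxx orbF norm_max_mem //.
have Im_gt0 : 0 < 'Im t.
  have := norm_max_Re_neq0 (expr_i_dvd4 n4).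
  by rewrite ReMil Im_conj opprK lt_def S_Im andbT.
have /orP [/eqP->|/eqP->] : (x == 'i) || (x == - 'i) by rewrite -eqf_sqr sqrCi x2.
  by rewrite eqxx ReMil Im_conj opprK Im_gt0.
rewrite eqNr (negbTE (neq0Ci _)) mulNr raddfN /= ReMil Im_conj !opprK oppr_gt0.
by rewrite (lt_gtF Im_gt0).
Qed.

End NormMaximiser.

Lemma max_norm_sum {S0} : (1 < n)%N -> unity_subset n S0 ->
  (forall S, unity_subset n S -> `|\sum_(x <- S) x| <= `|\sum_(x <- S0) x|) ->
  `|\sum_(x <- S0) x| = if (4 %| n)%N then `|'i + \sum_(x <- pos_roots l) x|
                        else `|\sum_(x <- pos_roots l) x|.
Proof.
move=> n_gt1 S0_sub S0_max.
have [S S_sub [S_norm S_Im S_dom]] := exists_dominant_max n_gt1 S0_sub.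
have S_max S' : unity_subset n S' -> `|\sum_(x <- S') x| <= `|\sum_(x <- S) x|.
  by rewrite S_norm; exact: S0_max.
rewrite -S_norm (perm_big _ (dominant_max_perm S S_sub S_max S_dom S_Im)).
by case: ifP; rewrite ?big_cons.
Qed.

End RootsSeq.

End UnityRoots.

Lemma norm_sum_order1 {S} : unity_subset 1 S -> `|\sum_(x <- S) x| <= 1.
Proof.
case/andP=> S_uniq /allP S_roots.
have S_sub1 : {subset S <= [:: 1]} by move=> x /S_roots; rewrite expr1 mem_seq1.
have := uniq_leq_size S_uniq S_sub1.
case: S S_sub1 {S_uniq S_roots} => [|x [|//]] S_sub1 _.
  by rewrite big_nil normr0 ler01.
by have /S_sub1 := mem_head x [::]; rewrite mem_seq1 big_seq1 => /eqP ->; rewrite normr1.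
Qed.

Theorem lemma3p10 (n : nat) (f g : algC) :
  (0 < n)%N ->
  is_max (re_sum_values n) f ->
  is_max (abs_sum_values n) g ->
  g = (if (4 %| n)%N then sqrtC (f ^+ 2 + 1) else f).
Proof.
move=> n_gt0 [[Sf [Sf_sub fE]] f_max] [[Sg [Sg_sub gE]] g_max].
have [l l_uniq l_roots] := unity_roots_seq n n_gt0.
have f_sum : f = \sum_(x <- pos_roots l) x.
  rewrite -(Creal_ReP _ (sum_pos_roots_real l_uniq l_roots)).
  apply/le_anti/andP; split; first by rewrite fE; exact: Re_sum_le_pos_roots.
  by apply: f_max; exists (pos_roots l); split=> //; exact: unity_subset_filter.
have f_ge0 : 0 <= f by apply: f_max; exists [::]; rewrite big_nil raddf0.
have Sg_max S : unity_subset n S -> `|\sum_(x <- S) x| <= `|\sum_(x <- Sg) x|.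
  by move=> S_sub; rewrite -gE; apply: g_max; exists S.
rewrite gE; have [n_gt1|n_le1] := ltnP 1 n.
  rewrite (max_norm_sum n_gt0 l_uniq l_roots n_gt1 Sg_sub Sg_max) -f_sum.
  case: ifP => _; last exact: ger0_norm.
  have f_real : f \is Num.real := ger0_real f_ge0.
  rewrite normC_Re_Im !raddfD /= Re_i Im_i (Creal_ReP _ f_real) (Creal_ImP _ f_real).
  by rewrite add0r addr0 expr1n.
have n1 : n = 1%N by apply/anti_leq/andP.
rewrite n1 in Sg_sub f_max *; apply/le_anti/andP; split.
  apply: le_trans (norm_sum_order1 Sg_sub) _; apply: f_max; exists [:: 1].
  rewrite big_seq1 /unity_subset /= expr1n eqxx.
  by split=> //; apply/esym/Creal_ReP/real1.
by rewrite fE; apply: (le_trans (leif_Re_Creal _).1); exact: Sg_max.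
Qed.
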